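(* Let $m\ge1$ be an integer, $0<h\le1$, and $E=(\alpha+i\mu)h^{2m/(m+1)}$ with $\alpha,\mu>0$ independent of $h$. Let \[ \varphi(x)=\int_0^x(E+m^{-1}y^{2m})^{1/2}\,dy, \] where the branch of the square root is chosen to have positive imaginary part, and let \[ f=-h^2\Big(\tfrac34(\varphi')^{-2}(\varphi'')^2-\tfrac12(\varphi')^{-1}\varphi'''\Big). \] Then: (i) There exists $C>0$ independent of $h$ such that \[ |\operatorname{Im}\varphi|\le C\begin{cases}h(1+\log(x/h^{1/2})),& m=1,\\ h,& m\ge2.\end{cases} \] In particular, if $|x|\le Ch^{1/(m+1)}$, then $|\operatorname{Im}\varphi|\le C'$ for some $C'>0$ independent of $h$. (ii) There exists $C>0$ independent of $h$ such that \[ C^{-1}\sqrt{h^{2m/(m+1)}+x^{2m}}\le|\varphi'(x)|\le C\sqrt{h^{2m/(m+1)}+x^{2m}}. \] (iii) $\varphi'=(E+m^{-1}x^{2m})^{1/2}$, $\varphi''=x^{2m-1}(\varphi')^{-1}$, $\varphi'''=\big((1-m^{-1})x^{4m-2}+E(2m-1)x^{2m-2}\big)(\varphi')^{-3}$, and in particular \[ f=-h^2x^{2m-2}\Big(\big(\tfrac14+\tfrac1{2m}\big)x^{2m}-\big(m-\tfrac12\big)E\Big)(\varphi')^{-4}. \] *)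

From Stdlib Require Import Reals.
From Coquelicot Require Import Coquelicot.
Open Scope R_scope.

Definition hpow (m : nat) (h : R) : R := Rpower h (2 * INR m / (INR m + 1)).

Definition Eh (alpha mu : R) (m : nat) (h : R) : C :=
  Cmult (alpha, mu) (RtoC (hpow m h)).

(* Square root of w with nonnegative imaginary part, written out explicitly:
   (sqrt((|w| + Re w)/2), sqrt((|w| - Re w)/2)).  For Im w > 0 (the only case
   used: Im (E + y^{2m}/m) = mu h^{2m/(m+1)} > 0) this is the unique z with
   z^2 = w and Im z > 0, i.e. the branch "with positive imaginary part". *)
Definition sqrt_pim (w : C) : C :=
  (sqrt ((Cmod w + Re w) / 2), sqrt ((Cmod w - Re w) / 2)).

Definition dphi (m : nat) (E : C) (x : R) : C :=
  sqrt_pim (Cplus E (RtoC (x ^ (2 * m) / INR m))).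

Definition phi (m : nat) (E : C) (x : R) : C :=
  @RInt C_R_CompleteNormedModule (dphi m E) 0 x.

Definition d2phi (m : nat) (E : C) (x : R) : C :=
  Cdiv (RtoC (x ^ (2 * m - 1))) (dphi m E x).

Definition d3phi (m : nat) (E : C) (x : R) : C :=
  Cdiv (Cplus (RtoC ((1 - / INR m) * x ^ (4 * m - 2)))
              (Cmult E (RtoC (INR (2 * m - 1) * x ^ (2 * m - 2)))))
       (Cmult (dphi m E x) (Cmult (dphi m E x) (dphi m E x))).

Definition fpot (h : R) (m : nat) (E : C) (x : R) : C :=
  Cmult (RtoC (- h ^ 2))
    (Cminus (Cmult (RtoC (3 / 4))
               (Cmult (Cinv (Cmult (dphi m E x) (dphi m E x)))
                      (Cmult (d2phi m E x) (d2phi m E x))))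
            (Cmult (RtoC (1 / 2))
               (Cmult (Cinv (dphi m E x)) (d3phi m E x)))).

(* Put [w x = E + x^(2m)/m = a x + i b], where [b = mu h^(2m/(m+1)) > 0] does not depend on
   [x], so [phi' = sqrt_pim w] has positive real and imaginary parts and [phi'^2 = w].
   Part (iii) is calculus together with this relation, and part (ii) is [|phi'|^2 = |w|]
   with [|w|] comparable to [h^(2m/(m+1)) + x^(2m)].
   For part (i), [Im phi' = b / (2 Re phi') <= b / (2 sqrt a)].  Writing [s = h^(1/(m+1))],
   this is at most [C s^2 / sqrt (x^2 + s^2)] for [m = 1] and [C s^(m+2) / (x^2 + s^2)] for
   [m >= 2]; by the mean value theorem [|Im phi|] is then dominated by the primitives
   [C s^2 asinh (x/s)] and [C s^(m+1) atan (x/s)] of these majorants. *)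

From Stdlib Require Import Reals Lra Lia.
From Coquelicot Require Import Coquelicot.
Open Scope R_scope.

(** * The square root with positive imaginary part *)

Lemma Re_sqrt_pim_sqr (w : C) :
  Re (sqrt_pim w) * Re (sqrt_pim w) = (Cmod w + Re w) / 2.
Proof.
pose proof (re_le_Cmod w) as Hw; apply Rabs_le_between in Hw.
apply sqrt_sqrt; lra.
Qed.

Lemma Im_sqrt_pim_sqr (w : C) :
  Im (sqrt_pim w) * Im (sqrt_pim w) = (Cmod w - Re w) / 2.
Proof.
pose proof (re_le_Cmod w) as Hw; apply Rabs_le_between in Hw.
apply sqrt_sqrt; lra.
Qed.

Lemma Cmod_sqr (w : C) : Cmod w * Cmod w = Re w * Re w + Im w * Im w.
Proof.
destruct w as [a b]; unfold Cmod; simpl.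
rewrite sqrt_sqrt; nra.
Qed.

Lemma Cmod_gt_Rabs_Re (w : C) : Im w <> 0 -> Rabs (Re w) < Cmod w.
Proof.
intros Hb; pose proof (Cmod_sqr w); pose proof (Cmod_ge_0 w).
apply Rabs_def1; nra.
Qed.

Lemma sqrt_pim_pos (w : C) :
  Im w <> 0 -> 0 < Re (sqrt_pim w) /\ 0 < Im (sqrt_pim w).
Proof.
intros Hb; pose proof (Cmod_gt_Rabs_Re w Hb) as Hw; apply Rabs_def2 in Hw.
split; apply sqrt_lt_R0; lra.
Qed.

Lemma Re_Im_sqrt_pim (w : C) :
  0 < Im w -> 2 * Re (sqrt_pim w) * Im (sqrt_pim w) = Im w.
Proof.
intros Hb.
destruct (sqrt_pim_pos w ltac:(lra)) as [Hu Hv].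
pose proof (Re_sqrt_pim_sqr w); pose proof (Im_sqrt_pim_sqr w); pose proof (Cmod_sqr w).
set (u := Re (sqrt_pim w)) in *; set (v := Im (sqrt_pim w)) in *.
assert (Hsq : (2 * u * v - Im w) * (2 * u * v + Im w) = 0) by nra.
apply Rmult_integral in Hsq; destruct Hsq; nra.
Qed.

Lemma sqrt_pim_sqr (w : C) : 0 < Im w -> (sqrt_pim w * sqrt_pim w)%C = w.
Proof.
intros Hb.
pose proof (Re_Im_sqrt_pim w Hb).
pose proof (Re_sqrt_pim_sqr w); pose proof (Im_sqrt_pim_sqr w).
destruct w as [a b]; unfold Cmult; simpl in *.
f_equal; lra.
Qed.

Lemma sqrt_pim_neq0 (w : C) : Im w <> 0 -> sqrt_pim w <> 0%C.
Proof.
intros Hb H0; destruct (sqrt_pim_pos w Hb) as [Hu _].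
rewrite H0 in Hu; simpl in Hu; lra.
Qed.

Lemma Cmod_sqrt_pim (w : C) : Cmod (sqrt_pim w) = sqrt (Cmod w).
Proof.
unfold Cmod at 1; f_equal; simpl.
change (sqrt ((Cmod w + Re w) / 2)) with (Re (sqrt_pim w)).
change (sqrt ((Cmod w - Re w) / 2)) with (Im (sqrt_pim w)).
rewrite !Rmult_1_r, Re_sqrt_pim_sqr, Im_sqrt_pim_sqr; lra.
Qed.

Lemma Im_sqrt_pim_le (w : C) (c : R) :
  0 < Re w -> 0 < Im w -> 0 <= c -> Im w * Im w <= 4 * Re w * (c * c) ->
  Im (sqrt_pim w) <= c.
Proof.
intros Ha Hb Hc Hbc.
destruct (sqrt_pim_pos w ltac:(lra)) as [Hu Hv].
pose proof (Re_Im_sqrt_pim w Hb); pose proof (Re_sqrt_pim_sqr w).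
pose proof (Cmod_gt_Rabs_Re w ltac:(lra)) as Hr; apply Rabs_def2 in Hr.
set (u := Re (sqrt_pim w)) in *; set (v := Im (sqrt_pim w)) in *.
(* [Re w <= u^2] and [2 u v = Im w] give [4 Re w v^2 <= (Im w)^2 <= 4 Re w c^2]. *)
assert (Hua : Re w <= u * u) by lra.
assert (Hvc : Re w * (v * v) <= Re w * (c * c)) by nra.
assert (v * v <= c * c) by (apply (Rmult_le_reg_l (Re w)); lra).
nra.
Qed.

(** * Derivatives of complex-valued functions of a real variable *)

Notation is_Cderive := (@is_derive R_AbsRing C_R_NormedModule).

Lemma is_derive_eq_value {K : AbsRing} {V : NormedModule K} (f : K -> V) (x : K)
  (l l' : V) : is_derive f x l -> l = l' -> is_derive f x l'.
Proof. now intros H <-. Qed.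

Lemma is_derive_pair (u v : R -> R) (x du dv : R) :
  is_derive u x du -> is_derive v x dv ->
  is_Cderive (fun t => (u t, v t) : C) x (du, dv).
Proof.
intros Hu Hv.
apply (filterdiff_comp'_2 u v (fun a b => (a, b) : C) x _ _ (fun a b => (a, b)));
  [exact Hu | exact Hv |].
apply filterdiff_linear, is_linear_prod; [apply is_linear_fst | apply is_linear_snd].
Qed.

Lemma is_derive_Re (f : R -> C) (x : R) (df : C) :
  is_Cderive f x df -> is_derive (fun t => Re (f t)) x (Re df).
Proof.
intros Hf.
unfold is_derive in *.
apply (filterdiff_comp' f (fun z : C_R_NormedModule => fst z) x _
  (fun z : C_R_NormedModule => fst z) Hf).
apply filterdiff_linear, (@is_linear_fst R_AbsRing R_NormedModule R_NormedModule).
Qed.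

Lemma is_derive_Im (f : R -> C) (x : R) (df : C) :
  is_Cderive f x df -> is_derive (fun t => Im (f t)) x (Im df).
Proof.
intros Hf.
unfold is_derive in *.
apply (filterdiff_comp' f (fun z : C_R_NormedModule => snd z) x _
  (fun z : C_R_NormedModule => snd z) Hf).
apply filterdiff_linear, (@is_linear_snd R_AbsRing R_NormedModule R_NormedModule).
Qed.

Lemma is_derive_Cmult (f g : R -> C) (x : R) (df dg : C) :
  is_Cderive f x df -> is_Cderive g x dg ->
  is_Cderive (fun t => (f t * g t)%C) x (df * g x + f x * dg)%C.
Proof.
intros Hf Hg.
apply is_derive_Re in Hf as Hf1; apply is_derive_Im in Hf as Hf2.
apply is_derive_Re in Hg as Hg1; apply is_derive_Im in Hg as Hg2.
replace (df * g x + f x * dg)%C with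
  ((Re df * Re (g x) + Re (f x) * Re dg) - (Im df * Im (g x) + Im (f x) * Im dg),
   (Re df * Im (g x) + Re (f x) * Im dg) + (Im df * Re (g x) + Im (f x) * Re dg))
  by (destruct df, dg, (f x), (g x); unfold Cmult, Cplus; simpl; f_equal; ring).
apply is_derive_pair; eapply is_derive_eq_value.
- apply (is_derive_minus (fun t => Re (f t) * Re (g t)) (fun t => Im (f t) * Im (g t)));
    apply Derive.is_derive_mult;
    first [exact Hf1 | exact Hf2 | exact Hg1 | exact Hg2 | intros; apply Rmult_comm].
- unfold minus, plus, opp; simpl; ring.
- apply (is_derive_plus (fun t => Re (f t) * Im (g t)) (fun t => Im (f t) * Re (g t)));
    apply Derive.is_derive_mult;
    first [exact Hf1 | exact Hf2 | exact Hg1 | exact Hg2 | intros; apply Rmult_comm].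
- unfold plus; simpl; ring.
Qed.

Lemma is_derive_Cinv (f : R -> C) (x : R) (df : C) :
  is_Cderive f x df -> f x <> 0%C ->
  is_Cderive (fun t => / f t)%C x (- (df / (f x * f x)))%C.
Proof.
intros Hf Hnz.
assert (Cinv_denominator : forall a b : R,
  (a * a - b * b) * (a * a - b * b) + (a * b + b * a) * (a * b + b * a)
  = (a * a + b * b) * (a * a + b * b)) by (intros; ring).
apply is_derive_Re in Hf as Hf1; apply is_derive_Im in Hf as Hf2.
assert (Hn : Re (f x) ^ 2 + Im (f x) ^ 2 <> 0).
{ intro H; apply Hnz; destruct (f x) as [a b]; simpl in H.
  assert (a = 0) by nra; assert (b = 0) by nra; subst; reflexivity. }
assert (Dn : is_derive (fun t => Re (f t) ^ 2 + Im (f t) ^ 2) x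
               (INR 2 * Re df * Re (f x) ^ 1 + INR 2 * Im df * Im (f x) ^ 1)).
{ apply (is_derive_plus (fun t => Re (f t) ^ 2) (fun t => Im (f t) ^ 2));
    apply (is_derive_pow (fun t => _ (f t))); assumption. }
apply is_derive_pair; eapply is_derive_eq_value.
- apply (is_derive_div (fun t => Re (f t))); eassumption.
- cbv beta; revert Hn; destruct (f x) as [a b], df as [p q]; simpl;
    rewrite ?Rmult_1_r; intro Hn.
  rewrite Cinv_denominator; field; contradict Hn; nra.
- apply (is_derive_div (fun t => - Im (f t))); [| eassumption | exact Hn].
  apply (is_derive_opp (fun t => Im (f t))); exact Hf2.
- cbv beta; revert Hn; destruct (f x) as [a b], df as [p q]; simpl;
    unfold opp; simpl; rewrite ?Rmult_1_r; intro Hn.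
  rewrite Cinv_denominator; field; contradict Hn; nra.
Qed.

Lemma is_derive_sqrt_pim_Re (b y : R) : 0 < b ->
  is_Cderive (fun t => sqrt_pim (t, b)) y (/ (2 * sqrt_pim (y, b)))%C.
Proof.
intros Hb.
pose proof (Cmod_sqr (y, b)) as Hr2.
pose proof (Cmod_gt_Rabs_Re (y, b) ltac:(simpl; lra)) as Hr; apply Rabs_def2 in Hr.
pose proof (Re_sqrt_pim_sqr (y, b)) as Hu2; pose proof (Im_sqrt_pim_sqr (y, b)) as Hv2.
destruct (sqrt_pim_pos (y, b) ltac:(simpl; lra)) as [Hu Hv].
set (r := Cmod (y, b)) in *.
set (u := Re (sqrt_pim (y, b))) in *; set (v := Im (sqrt_pim (y, b))) in *.
simpl Re in *; simpl Im in *.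
assert (Huv : u * u + v * v = r) by lra.
replace (/ (2 * sqrt_pim (y, b)))%C with ((u / (2 * r), - v / (2 * r)) : C).
2:{ change (sqrt_pim (y, b)) with ((u, v) : C).
    unfold Cinv, Cmult; simpl; rewrite <- Huv; f_equal; field; nra. }
change (fun t => sqrt_pim (t, b)) with
  (fun t => (sqrt ((sqrt (t ^ 2 + b ^ 2) + t) / 2), sqrt ((sqrt (t ^ 2 + b ^ 2) - t) / 2)) : C).
assert (Er : sqrt (y * (y * 1) + b * (b * 1)) = r) by reflexivity.
apply is_derive_pair; auto_derive; rewrite ?Er.
- repeat split; nra.
- change (sqrt ((r + y) * / 2)) with u.
  replace (y * 1) with (2 * (u * u) - r) by lra; field; lra.
- repeat split; nra.
- change (sqrt ((r + - y) * / 2)) with v.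
  replace (y * 1) with (r - 2 * (v * v)) by lra; field; lra.
Qed.

Lemma is_derive_sqrt_pim (a : R -> R) (b x da : R) : 0 < b -> is_derive a x da ->
  is_Cderive (fun t => sqrt_pim (a t, b)) x (da / (2 * sqrt_pim (a x, b)))%C.
Proof.
intros Hb Ha.
eapply is_derive_eq_value.
- exact (is_derive_comp (fun y => sqrt_pim (y, b)) a x _ da
           (is_derive_sqrt_pim_Re b (a x) Hb) Ha).
- apply scal_R_Cmult.
Qed.

(** * The derivatives of phi *)

Lemma pow_2m_decomp (m : nat) (x : R) : (1 <= m)%nat ->
  x ^ (2 * m - 1) = x * x ^ (2 * m - 2) /\
  x ^ (2 * m) = x * x * x ^ (2 * m - 2) /\
  x ^ (4 * m - 2) = x * x * (x ^ (2 * m - 2) * x ^ (2 * m - 2)).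
Proof.
intros Hm; split; [| split].
- replace (2 * m - 1)%nat with (S (2 * m - 2)) by lia; reflexivity.
- replace (2 * m)%nat with (S (S (2 * m - 2))) at 1 by lia; simpl; ring.
- replace (4 * m - 2)%nat with (S (S (2 * m - 2 + (2 * m - 2)))) by lia.
  simpl; rewrite pow_add; ring.
Qed.

Lemma dphi_eq (m : nat) (E : C) (t : R) :
  dphi m E t = sqrt_pim (Re E + t ^ (2 * m) / INR m, Im E).
Proof. unfold dphi; destruct E; unfold Cplus; simpl; rewrite Rplus_0_r; reflexivity. Qed.

Section PhiDerivatives.

Variables (m : nat) (E : C).
Hypotheses (Hm : (1 <= m)%nat) (HE : 0 < Im E).

Let HN : INR m <> 0.
Proof. apply not_0_INR; lia. Qed.

Let HNC : RtoC (INR m) <> 0%C.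
Proof. intro H; apply HN, RtoC_inj, H. Qed.

Lemma dphi_sqr (x : R) : (dphi m E x * dphi m E x)%C = (E + RtoC (x ^ (2 * m) / INR m))%C.
Proof. apply sqrt_pim_sqr; destruct E; simpl in *; lra. Qed.

Lemma dphi_neq0 (x : R) : dphi m E x <> 0%C.
Proof. apply sqrt_pim_neq0; destruct E; simpl in *; apply Rgt_not_eq; lra. Qed.

Lemma is_derive_dphi (x : R) : is_Cderive (dphi m E) x (d2phi m E x).
Proof.
assert (Ha : is_derive (fun t => Re E + t ^ (2 * m) / INR m) x (2 * x ^ (2 * m - 1))).
{ auto_derive; [exact I |].
  replace (Init.Nat.pred (m + (m + 0))) with (2 * m - 1)%nat by lia.
  rewrite plus_INR, plus_INR; simpl; field; exact HN. }
apply (is_derive_ext (fun t => sqrt_pim (Re E + t ^ (2 * m) / INR m, Im E))).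
{ intro t; symmetry; apply dphi_eq. }
eapply is_derive_eq_value; [exact (is_derive_sqrt_pim _ _ _ _ HE Ha) |].
cbv beta; rewrite <- dphi_eq; unfold d2phi.
match goal with |- ?A = ?B => change (A = B :> C) end.
rewrite RtoC_mult; field; apply dphi_neq0.
Qed.

Lemma dphi_sqr_sub (x : R) :
  E = (dphi m E x * dphi m E x - RtoC x * RtoC x * RtoC (x ^ (2 * m - 2)) / RtoC (INR m))%C.
Proof.
destruct (pow_2m_decomp m x Hm) as (_ & Hx2m & _).
rewrite dphi_sqr, Hx2m, RtoC_div, !RtoC_mult by exact HN.
field; exact HNC.
Qed.

Lemma is_derive_d2phi (x : R) : is_Cderive (d2phi m E) x (d3phi m E x).
Proof.
assert (Hp : is_Cderive (fun t => RtoC (t ^ (2 * m - 1))) x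
                        (RtoC (INR (2 * m - 1) * x ^ (2 * m - 2)))).
{ apply (is_derive_pair (fun t => t ^ (2 * m - 1)) (fun _ => 0)).
  - auto_derive; [exact I |].
    replace (Init.Nat.pred (m + (m + 0) - 1)) with (2 * m - 2)%nat by lia.
    replace (m + (m + 0) - 1)%nat with (2 * m - 1)%nat by lia; ring.
  - exact (is_derive_const _ _). }
eapply is_derive_eq_value.
{ apply (is_derive_Cmult (fun t => RtoC (t ^ (2 * m - 1))) (fun t => / dphi m E t)%C);
    [exact Hp | apply is_derive_Cinv; [apply is_derive_dphi | apply dphi_neq0]]. }
match goal with |- ?A = ?B => change (A = B :> C) end.
destruct (pow_2m_decomp m x Hm) as (Hx1 & _ & Hx4).
unfold d3phi, d2phi.
replace (INR (2 * m - 1)) with (2 * INR m - 1)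
  by (rewrite minus_INR, mult_INR by lia; simpl; ring).
pose proof (dphi_neq0 x) as Hz; pose proof (dphi_sqr_sub x) as HEz.
set (z := dphi m E x) in *; clearbody z; rewrite HEz.
rewrite Hx1, Hx4, !RtoC_mult, !RtoC_minus, (RtoC_inv _ HN), !RtoC_mult.
field; auto.
Qed.

Lemma fpot_eq (h x : R) :
  fpot h m E x =
  Cmult (RtoC (- h ^ 2 * x ^ (2 * m - 2)))
    (Cmult (Cminus (RtoC ((1 / 4 + 1 / (2 * INR m)) * x ^ (2 * m)))
                   (Cmult (RtoC (INR m - 1 / 2)) E))
           (Cinv (Cmult (Cmult (dphi m E x) (dphi m E x))
                        (Cmult (dphi m E x) (dphi m E x))))).
Proof.
destruct (pow_2m_decomp m x Hm) as (Hx1 & Hx2 & Hx4).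
unfold fpot, d3phi, d2phi.
replace (INR (2 * m - 1)) with (2 * INR m - 1)
  by (rewrite minus_INR, mult_INR by lia; simpl; ring).
pose proof (dphi_neq0 x) as Hz; pose proof (dphi_sqr_sub x) as HEz.
set (z := dphi m E x) in *; clearbody z; rewrite HEz.
rewrite Hx1, Hx2, Hx4.
rewrite !RtoC_mult, !RtoC_minus, !RtoC_plus, !RtoC_opp, RtoC_pow, (RtoC_inv _ HN).
rewrite !RtoC_div, !RtoC_mult by lra.
field; auto.
Qed.

Lemma is_derive_phi (x : R) : is_Cderive (phi m E) x (dphi m E x).
Proof.
assert (Hcont : forall t, @continuous R_UniformSpace C_R_NormedModule (dphi m E) t).
{ intro t; apply (@ex_derive_continuous R_AbsRing C_R_NormedModule).
  eexists; apply is_derive_dphi. }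
apply (@is_derive_RInt C_R_NormedModule (dphi m E) _ 0); [| apply Hcont].
apply filter_forall; intro b0.
apply (@RInt_correct C_R_CompleteNormedModule), (@ex_RInt_continuous C_R_CompleteNormedModule).
intros; apply Hcont.
Qed.

End PhiDerivatives.

(** * The imaginary part of phi *)

Lemma Rabs_le_of_derive_le (F G f g : R -> R) (x : R) :
  (forall t, is_derive F t (f t)) -> (forall t, is_derive G t (g t)) ->
  (forall t, Rabs (f t) <= g t) -> F 0 = 0 -> G 0 = 0 ->
  Rabs (F x) <= Rabs (G x).
Proof.
intros HF HG Hfg F0 G0.
(* Mean value theorem for [G + sg F] with [sg = 1] and [sg = -1]. *)
assert (Hmvt : forall sg, exists c, G x + sg * F x = (g c + sg * f c) * x).
{ intro sg.
  assert (D : forall t, is_derive (fun t => G t + sg * F t) t (g t + sg * f t)).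
  { intro t; apply (is_derive_plus G (fun t => sg * F t)); [apply HG |].
    apply is_derive_scal, HF. }
  destruct (MVT_gen (fun t => G t + sg * F t) 0 x (fun t => g t + sg * f t))
    as [c [_ Hc]].
  - intros t _; apply D.
  - intros t _; apply (continuity_pt_filterlim (fun t => G t + sg * F t) t).
    apply (@ex_derive_continuous R_AbsRing R_NormedModule (fun t => G t + sg * F t)).
    eexists; apply D.
  - exists c; rewrite F0, G0 in Hc; lra. }
destruct (Hmvt 1) as [c1 H1], (Hmvt (-1)) as [c2 H2].
pose proof (Hfg c1) as A1; pose proof (Hfg c2) as A2.
apply Rabs_le_between in A1; apply Rabs_le_between in A2.
destruct (Rle_or_lt 0 x).
- assert (0 <= G x + F x) by nra; assert (0 <= G x - F x) by nra.
  rewrite (Rabs_pos_eq (G x)) by lra; apply Rabs_le; lra.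
- assert (G x + F x <= 0) by nra; assert (G x - F x <= 0) by nra.
  rewrite (Rabs_left1 (G x)) by lra; apply Rabs_le; lra.
Qed.

Lemma is_derive_atan_div (c s t : R) : 0 < s ->
  is_derive (fun t => c * atan (t / s)) t (c * s / (s * s + t * t)).
Proof. intros Hs; auto_derive; [exact I | field; split; nra]. Qed.

Lemma Rabs_atan_le (c y : R) : 0 <= c -> Rabs (c * atan y) <= 2 * c.
Proof.
intros Hc; rewrite Rabs_mult, Rabs_pos_eq by lra.
destruct (atan_bound y); pose proof PI_4.
assert (Rabs (atan y) <= 2) by (apply Rabs_le; lra).
nra.
Qed.

(* [asinh (t / s)], written so that its derivative is [1 / sqrt (t^2 + s^2)] on the nose. *)
Definition asinh_over (s t : R) : R := ln (t + sqrt (t * t + s * s)) - ln s.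

Lemma sqrt_sum_sqr_gt_Rabs (s t : R) : 0 < s ->
  0 < t + sqrt (t * t + s * s) /\ 0 < - t + sqrt (t * t + s * s).
Proof.
intros Hs.
assert (HS : 0 <= sqrt (t * t + s * s)) by apply sqrt_pos.
assert (HS2 : sqrt (t * t + s * s) * sqrt (t * t + s * s) = t * t + s * s)
  by (apply sqrt_sqrt; nra).
split; nra.
Qed.

Lemma is_derive_asinh_over (c s t : R) : 0 < s ->
  is_derive (fun t => c * asinh_over s t) t (c / sqrt (t * t + s * s)).
Proof.
intros Hs; destruct (sqrt_sum_sqr_gt_Rabs s t Hs) as [Hp Hm].
assert (HS : 0 < sqrt (t * t + s * s)) by (apply sqrt_lt_R0; nra).
unfold asinh_over; auto_derive.
- repeat split; nra.
- field; lra.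
Qed.

Lemma asinh_over_opp (s t : R) : 0 < s -> asinh_over s (- t) = - asinh_over s t.
Proof.
intros Hs; destruct (sqrt_sum_sqr_gt_Rabs s t Hs) as [Hp Hm].
assert (HS2 : sqrt (t * t + s * s) * sqrt (t * t + s * s) = t * t + s * s)
  by (apply sqrt_sqrt; nra).
unfold asinh_over; replace (- t * - t) with (t * t) by ring.
(* [(S - t) (S + t) = s^2] with [S = sqrt (t^2 + s^2)]. *)
assert (Hprod : ln (- t + sqrt (t * t + s * s)) + ln (t + sqrt (t * t + s * s)) = 2 * ln s).
{ rewrite <- ln_mult by lra.
  replace ((- t + sqrt (t * t + s * s)) * (t + sqrt (t * t + s * s))) with (s * s) by nra.
  rewrite ln_mult by lra; ring. }
lra.
Qed.

Lemma asinh_over_le (s y : R) : 0 < s -> 0 <= y ->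
  0 <= asinh_over s y <= 2 * (1 + ln (Rmax 1 (y / s))).
Proof.
intros Hs Hy.
assert (HS2 : sqrt (y * y + s * s) * sqrt (y * y + s * s) = y * y + s * s)
  by (apply sqrt_sqrt; nra).
assert (HS0 : 0 <= sqrt (y * y + s * s)) by apply sqrt_pos.
set (S := sqrt (y * y + s * s)) in *.
assert (HsS : s <= S) by nra.
assert (HSy : S <= y + s) by nra.
set (M := Rmax 1 (y / s)).
assert (HM1 : 1 <= M) by apply Rmax_l.
assert (HyM : y <= M * s).
{ assert (y / s <= M) by apply Rmax_r.
  apply (Rmult_le_compat_r s) in H; [| lra].
  unfold Rdiv in H; rewrite Rmult_assoc, Rinv_l, Rmult_1_r in H by lra; exact H. }
assert (Hln3 : ln 3 < 2).
{ rewrite <- (ln_exp 2); apply ln_increasing; [lra |].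
  pose proof (exp_ineq1 2 ltac:(lra)); lra. }
unfold asinh_over; fold S; split.
- assert (ln s <= ln (y + S)) by (apply ln_le; lra); lra.
- (* [y + S <= 2 y + s <= 3 M s] *)
  assert (ln (y + S) <= ln (3 * M * s)) by (apply ln_le; nra).
  rewrite !ln_mult in H by lra.
  assert (0 <= ln M) by (rewrite <- ln_1; apply ln_le; lra).
  lra.
Qed.

Lemma Rabs_asinh_over_le (c s x : R) : 0 < s -> 0 <= c ->
  Rabs (c * asinh_over s x) <= 2 * c * (1 + ln (Rmax 1 (Rabs x / s))).
Proof.
intros Hs Hc.
rewrite Rabs_mult, (Rabs_pos_eq c) by lra.
apply Rle_trans with (c * (2 * (1 + ln (Rmax 1 (Rabs x / s))))); [| right; ring].
apply Rmult_le_compat_l; [lra |].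
destruct (Rle_or_lt 0 x).
- rewrite (Rabs_pos_eq x) by lra.
  destruct (asinh_over_le s x Hs H); rewrite Rabs_pos_eq; lra.
- rewrite (Rabs_left x) by lra.
  destruct (asinh_over_le s (- x) Hs ltac:(lra)).
  rewrite asinh_over_opp in * by lra.
  rewrite Rabs_left1; lra.
Qed.

Lemma sqr_sum_mul_pow_le (p q : R) (k : nat) : 0 <= p -> 0 <= q ->
  (p + q) * (p + q) * p ^ k <= 4 * (p ^ (k + 2) + q ^ (k + 2)).
Proof.
intros Hp Hq; rewrite !pow_add; simpl.
assert (Hpk : 0 <= p ^ k) by (apply pow_le; lra).
assert (Hqk : 0 <= q ^ k) by (apply pow_le; lra).
destruct (Rle_or_lt q p).
- assert ((p + q) * (p + q) <= 4 * (p * p)) by nra.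
  assert ((p + q) * (p + q) * p ^ k <= 4 * (p * p) * p ^ k) by (apply Rmult_le_compat_r; lra).
  nra.
- assert ((p + q) * (p + q) <= 4 * (q * q)) by nra.
  assert (p ^ k <= q ^ k) by (apply pow_incr; lra).
  assert ((p + q) * (p + q) * p ^ k <= 4 * (q * q) * q ^ k)
    by (apply Rmult_le_compat; nra).
  nra.
Qed.

Lemma sum_le_mixed_weights (n alpha H X : R) : 0 < n -> 0 < alpha -> 0 <= H -> 0 <= X ->
  H + X <= (n + / alpha) * (alpha * H + X / n).
Proof.
intros Hn Ha HH HX.
assert (Hsplit : (n + / alpha) * (alpha * H + X / n) = H + X + (n * alpha * H + X / (n * alpha)))
  by (field; lra).
assert (0 <= X / (n * alpha)) by (apply Rdiv_le_0_compat; nra).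
assert (0 <= n * alpha * H) by (apply Rmult_le_pos; nra).
rewrite Hsplit; lra.
Qed.

Lemma Im_sqrt_pim_mixed_le (n alpha mu H X d : R) :
  1 <= n -> 0 < alpha -> 0 < mu -> 0 < H -> 0 <= X -> 0 <= d ->
  H * H <= 4 * (H + X) * (d * d) ->
  Im (sqrt_pim (alpha * H + X / n, mu * H)) <= mu * (n + / alpha) * d.
Proof.
intros Hn Ha Hmu HH HX Hd Hdd.
assert (Hk : 1 <= n + / alpha) by (pose proof (Rinv_0_lt_compat _ Ha); lra).
set (k := n + / alpha) in *.
assert (Hmix : H + X <= k * (alpha * H + X / n)) by (apply sum_le_mixed_weights; lra).
assert (0 <= X / n) by (apply Rdiv_le_0_compat; lra).
set (a := alpha * H + X / n) in *.
assert (Ha0 : 0 < a) by (unfold a; nra).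
assert (HHa : H * H <= 4 * a * (k * k * (d * d))).
{ assert (0 <= d * d) by nra.
  assert (4 * (H + X) * (d * d) <= 4 * (k * a) * (d * d)) by nra.
  assert (4 * (k * a) * (d * d) <= 4 * (k * k * a) * (d * d)) by nra.
  nra. }
apply Im_sqrt_pim_le; simpl; [exact Ha0 | nra | repeat apply Rmult_le_pos; lra |].
replace (mu * H * (mu * H)) with (mu * mu * (H * H)) by ring.
replace (4 * a * (mu * k * d * (mu * k * d))) with (mu * mu * (4 * a * (k * k * (d * d))))
  by ring.
apply Rmult_le_compat_l; nra.
Qed.

Lemma Im_sqrt_pim_le_m1 (alpha mu s t : R) : 0 < alpha -> 0 < mu -> 0 < s ->
  Im (sqrt_pim (alpha * s ^ 2 + t ^ 2 / 1, mu * s ^ 2))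
  <= mu * (1 + / alpha) * s ^ 2 / sqrt (t * t + s * s).
Proof.
intros Ha Hmu Hs.
assert (HS : 0 < sqrt (t * t + s * s)) by (apply sqrt_lt_R0; nra).
assert (HS2 : sqrt (t * t + s * s) * sqrt (t * t + s * s) = t * t + s * s)
  by (apply sqrt_sqrt; nra).
unfold Rdiv at 2; rewrite Rmult_assoc; fold (Rdiv (s ^ 2) (sqrt (t * t + s * s))).
apply Im_sqrt_pim_mixed_le; try lra; try nra.
- apply Rdiv_le_0_compat; nra.
- replace (s ^ 2 / sqrt (t * t + s * s) * (s ^ 2 / sqrt (t * t + s * s)))
    with (s ^ 2 * s ^ 2 / (s ^ 2 + t ^ 2))
    by (replace (s ^ 2 + t ^ 2) with (sqrt (t * t + s * s) * sqrt (t * t + s * s))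
          by (rewrite HS2; ring); field; lra).
  replace (4 * (s ^ 2 + t ^ 2) * (s ^ 2 * s ^ 2 / (s ^ 2 + t ^ 2)))
    with (4 * (s ^ 2 * s ^ 2)) by (field; nra).
  nra.
Qed.

Lemma Im_sqrt_pim_le_ge2 (m : nat) (alpha mu s t : R) :
  (2 <= m)%nat -> 0 < alpha -> 0 < mu -> 0 < s ->
  Im (sqrt_pim (alpha * s ^ (2 * m) + t ^ (2 * m) / INR m, mu * s ^ (2 * m)))
  <= mu * (INR m + / alpha) * (s ^ (m + 1) * s / (s * s + t * t)).
Proof.
intros Hm Ha Hmu Hs.
assert (HmR : 2 <= INR m) by (apply (le_INR 2); exact Hm).
set (p := s * s); set (q := t * t).
assert (Hp : 0 < p) by (unfold p; nra); assert (Hq : 0 <= q) by (unfold q; nra).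
destruct m as [| [| n]]; [lia | lia |].
replace (2 * S (S n))%nat with (n + n + 4)%nat by lia.
replace (S (S n) + 1)%nat with (n + 3)%nat by lia.
assert (HP : s ^ (n + n + 4) = p ^ n * (p * p)).
{ unfold p; rewrite Rpow_mult_distr, !pow_add; ring. }
assert (HQ : t ^ (n + n + 4) = q ^ (n + 2)).
{ unfold q; rewrite Rpow_mult_distr, !pow_add; ring. }
rewrite HP, HQ.
set (H := p ^ n * (p * p)); set (X := q ^ (n + 2)).
assert (HH : 0 < H) by (unfold H; pose proof (pow_lt p n Hp); apply Rmult_lt_0_compat; nra).
assert (Hd2 : s ^ (n + 3) * s / (p + q) * (s ^ (n + 3) * s / (p + q))
              = H * (p * p) / ((p + q) * (p + q))).
{ unfold H, p; rewrite Rpow_mult_distr, !pow_add; field; fold p q; nra. }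
pose proof (sqr_sum_mul_pow_le p q n ltac:(lra) Hq) as Hpow.
replace (p ^ (n + 2)) with H in Hpow by (unfold H; rewrite pow_add; ring); fold X in Hpow.
apply Im_sqrt_pim_mixed_le; try lra.
- apply pow_le; lra.
- apply Rdiv_le_0_compat; [| nra].
  pose proof (pow_lt s (n + 3) Hs); nra.
- rewrite Hd2.
  apply (Rmult_le_reg_r ((p + q) * (p + q))); [nra |].
  replace (4 * (H + X) * (H * (p * p) / ((p + q) * (p + q))) * ((p + q) * (p + q)))
    with (H * (p * p * (4 * (H + X)))) by (field; nra).
  replace (H * H * ((p + q) * (p + q))) with (H * (p * p * ((p + q) * (p + q) * p ^ n)))
    by (unfold H; ring).
  apply Rmult_le_compat_l; [lra |].
  apply Rmult_le_compat_l; nra.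
Qed.

Lemma Rabs_Im_phi_le (m : nat) (E : C) (G g : R -> R) (x : R) :
  (1 <= m)%nat -> 0 < Im E -> (forall t, is_derive G t (g t)) ->
  (forall t, Im (dphi m E t) <= g t) -> G 0 = 0 ->
  Rabs (Im (phi m E x)) <= Rabs (G x).
Proof.
intros Hm HE HG Hg HG0.
apply (Rabs_le_of_derive_le (fun t => Im (phi m E t)) G (fun t => Im (dphi m E t)) g);
  [| exact HG | | | exact HG0].
- intro t; apply is_derive_Im, is_derive_phi; assumption.
- intro t; rewrite Rabs_pos_eq; [apply Hg | apply sqrt_pos].
- unfold phi; rewrite RInt_point; reflexivity.
Qed.

Lemma hpow_root (m : nat) (h : R) : 0 < h ->
  let s := Rpower h (/ (INR m + 1)) in
  0 < s /\ hpow m h = s ^ (2 * m) /\ h = s ^ (m + 1).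
Proof.
intros Hh s.
assert (Hm0 : 0 <= INR m) by apply pos_INR.
assert (Hs : 0 < s) by apply exp_pos.
split; [exact Hs | split]; unfold s, hpow; rewrite <- Rpower_pow, Rpower_mult by exact Hs.
- f_equal; rewrite mult_INR; simpl; field; lra.
- rewrite plus_INR; simpl.
  replace (/ (INR m + 1) * (INR m + 1)) with 1 by (field; lra).
  rewrite Rpower_1; [reflexivity | exact Hh].
Qed.

Lemma Eh_eq (alpha mu : R) (m : nat) (h : R) :
  Eh alpha mu m h = (alpha * hpow m h, mu * hpow m h).
Proof. unfold Eh, Cmult, RtoC; simpl; f_equal; ring. Qed.

Lemma dphi_Eh (alpha mu : R) (m : nat) (h t : R) :
  dphi m (Eh alpha mu m h) t
  = sqrt_pim (alpha * hpow m h + t ^ (2 * m) / INR m, mu * hpow m h).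
Proof. rewrite dphi_eq, Eh_eq; reflexivity. Qed.

Lemma Rabs_Im_phi_le_m1 (alpha mu h x : R) : 0 < alpha -> 0 < mu -> 0 < h ->
  Rabs (Im (phi 1 (Eh alpha mu 1 h) x))
  <= 2 * mu * (INR 1 + / alpha) * (h * (1 + ln (Rmax 1 (Rabs x / sqrt h)))).
Proof.
intros Ha Hmu Hh.
destruct (hpow_root 1 h Hh) as (Hs & HH & Hhs); set (s := Rpower h _) in *.
assert (Hsqrt : s = sqrt h).
{ unfold s; simpl; replace (/ (1 + 1)) with (/ 2) by field; apply Rpower_sqrt, Hh. }
set (c := mu * (1 + / alpha) * s ^ 2).
assert (Hc : 0 <= c) by (unfold c; pose proof (Rinv_0_lt_compat _ Ha); apply Rmult_le_pos; nra).
eapply Rle_trans.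
{ apply (Rabs_Im_phi_le 1 _ (fun t => c * asinh_over s t) (fun t => c / sqrt (t * t + s * s))).
  - lia.
  - rewrite Eh_eq; simpl; rewrite HH; apply Rmult_lt_0_compat; [lra | apply pow_lt, Hs].
  - intro t; apply is_derive_asinh_over, Hs.
  - intro t; rewrite dphi_Eh, HH; apply Im_sqrt_pim_le_m1; assumption.
  - unfold asinh_over; rewrite Rmult_0_l, !Rplus_0_l, sqrt_square by lra.
    rewrite Rminus_diag; ring. }
eapply Rle_trans; [apply Rabs_asinh_over_le; assumption |].
rewrite <- Hsqrt; unfold c; rewrite Hhs; simpl; right; ring.
Qed.

Lemma Rabs_Im_phi_le_ge2 (m : nat) (alpha mu h x : R) :
  (2 <= m)%nat -> 0 < alpha -> 0 < mu -> 0 < h ->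
  Rabs (Im (phi m (Eh alpha mu m h) x)) <= 2 * mu * (INR m + / alpha) * h.
Proof.
intros Hm Ha Hmu Hh.
destruct (hpow_root m h Hh) as (Hs & HH & Hhs); set (s := Rpower h _) in *.
set (c := mu * (INR m + / alpha) * s ^ (m + 1)).
assert (Hc : 0 <= c).
{ unfold c; pose proof (Rinv_0_lt_compat _ Ha); pose proof (pos_INR m).
  pose proof (pow_lt _ (m + 1) Hs); apply Rmult_le_pos; nra. }
eapply Rle_trans.
{ apply (Rabs_Im_phi_le m _ (fun t => c * atan (t / s)) (fun t => c * s / (s * s + t * t))).
  - lia.
  - rewrite Eh_eq; simpl; rewrite HH; apply Rmult_lt_0_compat; [lra | apply pow_lt, Hs].
  - intro t; apply is_derive_atan_div, Hs.
  - intro t; rewrite dphi_Eh, HH.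
    eapply Rle_trans; [apply Im_sqrt_pim_le_ge2; assumption |].
    right; unfold c; field; nra.
  - unfold Rdiv; rewrite Rmult_0_l, atan_0; ring. }
eapply Rle_trans; [apply Rabs_atan_le, Hc |].
unfold c; rewrite Hhs; right; ring.
Qed.

Lemma Rabs_Im_phi_bound (m : nat) (alpha mu : R) :
  (1 <= m)%nat -> 0 < alpha -> 0 < mu ->
  exists C : R, 0 < C /\
    forall h x : R, 0 < h <= 1 ->
      Rabs (Im (phi m (Eh alpha mu m h) x)) <=
      C * (if Nat.eqb m 1 then h * (1 + ln (Rmax 1 (Rabs x / sqrt h))) else h).
Proof.
intros Hm Ha Hmu.
exists (2 * mu * (INR m + / alpha)); split.
{ pose proof (Rinv_0_lt_compat _ Ha); pose proof (pos_INR m); nra. }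
intros h x Hh.
destruct (Nat.eqb_spec m 1) as [-> | Hm1].
- apply Rabs_Im_phi_le_m1; lra.
- apply Rabs_Im_phi_le_ge2; [lia | lra ..].
Qed.

Lemma Rabs_Im_phi_bounded (m : nat) (alpha mu : R) :
  (1 <= m)%nat -> 0 < alpha -> 0 < mu ->
  forall C0 : R, 0 < C0 -> exists C' : R, 0 < C' /\
    forall h x : R, 0 < h <= 1 -> Rabs x <= C0 * Rpower h (/ (INR m + 1)) ->
      Rabs (Im (phi m (Eh alpha mu m h) x)) <= C'.
Proof.
intros Hm Ha Hmu C0 HC0.
destruct (Rabs_Im_phi_bound m alpha mu Hm Ha Hmu) as [C [HC Hbound]].
assert (HL : 0 <= ln (Rmax 1 C0)) by (rewrite <- ln_1; apply ln_le; [lra | apply Rmax_l]).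
exists (C * (1 + ln (Rmax 1 C0))); split; [nra |].
intros h x Hh Hx.
eapply Rle_trans; [apply Hbound, Hh |].
apply Rmult_le_compat_l; [lra |].
destruct (Nat.eqb_spec m 1) as [-> | _]; [| lra].
assert (Hsqrt : Rpower h (/ (INR 1 + 1)) = sqrt h).
{ simpl; replace (/ (1 + 1)) with (/ 2) by field; apply Rpower_sqrt; lra. }
rewrite Hsqrt in Hx.
assert (Hs : 0 < sqrt h) by (apply sqrt_lt_R0; lra).
assert (Hxs : Rabs x / sqrt h <= C0) by (apply Rle_div_l; lra).
assert (Hmax : ln (Rmax 1 (Rabs x / sqrt h)) <= ln (Rmax 1 C0)).
{ apply ln_le; [apply Rlt_le_trans with 1; [lra | apply Rmax_l] |].
  apply Rmax_le_compat; lra. }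
assert (0 <= ln (Rmax 1 (Rabs x / sqrt h))) by (rewrite <- ln_1; apply ln_le; [lra | apply Rmax_l]).
nra.
Qed.

(** * The size of phi' *)

Lemma sqrt_le_sqrt_comparable (A B K : R) : 1 <= K -> 0 <= A -> 0 <= B ->
  A <= K * B -> B <= K * A -> / K * sqrt A <= sqrt B <= K * sqrt A.
Proof.
intros HK HA HB HAB HBA.
assert (HK2 : K <= K * K) by nra.
split.
- rewrite <- (sqrt_square (/ K)) by (left; apply Rinv_0_lt_compat; lra).
  rewrite <- sqrt_mult_alt by (apply Rmult_le_pos; left; apply Rinv_0_lt_compat; lra).
  apply sqrt_le_1_alt.
  apply (Rmult_le_reg_l (K * K)); [nra |].
  replace (K * K * (/ K * / K * A)) with A by (field; lra); nra.
- rewrite <- (sqrt_square K) by lra; rewrite <- sqrt_mult_alt by nra.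
  apply sqrt_le_1_alt; nra.
Qed.

Lemma Cmod_dphi_comparable (m : nat) (alpha mu : R) :
  (1 <= m)%nat -> 0 < alpha -> 0 < mu ->
  exists C : R, 0 < C /\
    forall h x : R, 0 < h <= 1 ->
      / C * sqrt (hpow m h + x ^ (2 * m)) <= Cmod (dphi m (Eh alpha mu m h) x) /\
      Cmod (dphi m (Eh alpha mu m h) x) <= C * sqrt (hpow m h + x ^ (2 * m)).
Proof.
intros Hm Ha Hmu.
assert (HmR : 1 <= INR m) by (apply (le_INR 1); exact Hm).
assert (Hia : 0 < / alpha) by (apply Rinv_0_lt_compat; lra).
exists (1 + alpha + mu + INR m + / alpha); split; [lra |].
intros h x Hh.
rewrite dphi_Eh, Cmod_sqrt_pim.
assert (HH : 0 < hpow m h) by apply exp_pos.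
assert (HX : 0 <= x ^ (2 * m)) by (rewrite pow_mult; apply pow_le; nra).
assert (HXm : x ^ (2 * m) / INR m <= x ^ (2 * m)).
{ apply Rle_div_l; [lra |]; nra. }
assert (HXm0 : 0 <= x ^ (2 * m) / INR m) by (apply Rdiv_le_0_compat; lra).
set (a := alpha * hpow m h + x ^ (2 * m) / INR m).
set (b := mu * hpow m h).
pose proof (re_le_Cmod (a, b)) as Har; apply Rabs_le_between in Har; simpl in Har.
pose proof (Cmod_sqr (a, b)) as Hr2; pose proof (Cmod_ge_0 (a, b)) as Hr0; simpl in Hr2.
assert (Ha0 : 0 <= a) by (unfold a; nra); assert (Hb0 : 0 <= b) by (unfold b; nra).
assert (Hrab : Cmod (a, b) <= a + b).
{ destruct (Rle_or_lt (Cmod (a, b)) (a + b)); [assumption | nra]. }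
pose proof (sum_le_mixed_weights (INR m) alpha _ _ ltac:(lra) Ha (Rlt_le _ _ HH) HX) as Hmix.
apply sqrt_le_sqrt_comparable; [lra | lra | exact Hr0 | |].
- fold a in Hmix; nra.
- unfold a, b in *; nra.
Qed.

Theorem lemma5p1 (m : nat) (alpha mu : R) :
  (1 <= m)%nat -> 0 < alpha -> 0 < mu ->
  (* (i) *)
  (exists C : R, 0 < C /\
     forall h x : R, 0 < h <= 1 ->
       Rabs (Im (phi m (Eh alpha mu m h) x)) <=
       C * (if Nat.eqb m 1 then h * (1 + ln (Rmax 1 (Rabs x / sqrt h))) else h)) /\
  (forall C0 : R, 0 < C0 -> exists C' : R, 0 < C' /\
     forall h x : R, 0 < h <= 1 -> Rabs x <= C0 * Rpower h (/ (INR m + 1)) ->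
       Rabs (Im (phi m (Eh alpha mu m h) x)) <= C') /\
  (* (ii) *)
  (exists C : R, 0 < C /\
     forall h x : R, 0 < h <= 1 ->
       / C * sqrt (hpow m h + x ^ (2 * m)) <= Cmod (dphi m (Eh alpha mu m h) x) /\
       Cmod (dphi m (Eh alpha mu m h) x) <= C * sqrt (hpow m h + x ^ (2 * m))) /\
  (* (iii) *)
  (forall h x : R, 0 < h <= 1 ->
     @is_derive R_AbsRing C_R_NormedModule (phi m (Eh alpha mu m h)) x
        (dphi m (Eh alpha mu m h) x) /\
     @is_derive R_AbsRing C_R_NormedModule (dphi m (Eh alpha mu m h)) x
        (d2phi m (Eh alpha mu m h) x) /\
     @is_derive R_AbsRing C_R_NormedModule (d2phi m (Eh alpha mu m h)) x
        (d3phi m (Eh alpha mu m h) x) /\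
     fpot h m (Eh alpha mu m h) x =
       Cmult (RtoC (- h ^ 2 * x ^ (2 * m - 2)))
         (Cmult (Cminus (RtoC ((1 / 4 + 1 / (2 * INR m)) * x ^ (2 * m)))
                        (Cmult (RtoC (INR m - 1 / 2)) (Eh alpha mu m h)))
                (Cinv (Cmult (Cmult (dphi m (Eh alpha mu m h) x) (dphi m (Eh alpha mu m h) x))
                             (Cmult (dphi m (Eh alpha mu m h) x) (dphi m (Eh alpha mu m h) x)))))).

Proof.
intros Hm Ha Hmu.
assert (HE : forall h, 0 < h -> 0 < Im (Eh alpha mu m h)).
{ intros h Hh; rewrite Eh_eq; apply Rmult_lt_0_compat; [exact Hmu | apply exp_pos]. }
split; [exact (Rabs_Im_phi_bound m alpha mu Hm Ha Hmu) |].
split; [exact (Rabs_Im_phi_bounded m alpha mu Hm Ha Hmu) |].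
split; [exact (Cmod_dphi_comparable m alpha mu Hm Ha Hmu) |].
intros h x [Hh _].
split; [| split; [| split]].
- apply is_derive_phi; auto.
- apply is_derive_dphi; auto.
- apply is_derive_d2phi; auto.
- apply fpot_eq; auto.
Qed.
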